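(* Let $d,k$ be integers with $2 \leq d \leq \frac{k+1}{2}$, let $\Sigma_k=\{\sigma_1,\ldots,\sigma_k\}$ and $\Sigma_d=\{\sigma_1,\ldots,\sigma_d\}$. Consider two users over the alphabet $\Sigma_k$, where user 1 has confusion graph $G_1=(\Sigma_k,\{ab \mid a\in\Sigma_k,\ b\in\Sigma_k\setminus\Sigma_d,\ a\neq b\})$ and user 2 has the complement confusion graph $G_2=\overline{G_1}=(\Sigma_k,\{ab\mid a,b\in\Sigma_d,\ a\neq b\})$. Then for every $\alpha\in[0,1]$ the rate vector $(\alpha\log_2 d,\ (1-\alpha)\log_2(k-d+1))$ is optimal.
   Context: Setting: a sender broadcasts a word of length $n$ over a finite alphabet $\Sigma$ to $r$ users; user $i$ has a confusion graph $G_i$ on vertex set $\Sigma$, where $ab$ is an edge iff user $i$ cannot distinguish letters $a$ and $b$. Two words $x,y\in\Sigma^n$ are distinguishable by user $i$ if there is a coordinate $t$ with $x_t\neq y_t$ and $x_ty_t$ not an edge of $G_i$. A vector $(m_1,\ldots,m_r)$ of positive integers is feasible for length $n$ if there is a map $E:[m_1]\times\cdots\times[m_r]\to\Sigma^n$ such that for every $i$ and all tuples $a,a'$ with $a_i\neq a'_i$, the words $E(a)$ and $E(a')$ are distinguishable by user $i$. A rate vector $(R_1,\ldots,R_r)$ is feasible if there is a sequence of feasible vectors $(m_1^{(n)},\ldots,m_r^{(n)})$ for lengths $n\to\infty$ with $R_i=\lim_{n\to\infty}\frac{\log_2 m_i^{(n)}}{n}$ for all $i$. For two users, a rate vector is optimal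 if it is feasible and no user can increase his rate while the other user keeps the same rate. *)

From mathcomp Require Import all_boot.
From Stdlib Require Import Reals.

Set Implicit Arguments.
Unset Strict Implicit.
Unset Printing Implicit Defensive.

Definition word (Sigma : finType) (n : nat) := 'I_n -> Sigma.

Definition distinguishable (Sigma : finType) (G : rel Sigma) (n : nat)
  (x y : word Sigma n) : Prop :=
  exists t : 'I_n, x t != y t /\ ~~ G (x t) (y t).

Definition feasible_vec (Sigma : finType) (G1 G2 : rel Sigma) (n m1 m2 : nat)
  : Prop :=
  (0 < m1)%N /\ (0 < m2)%N /\
  exists E : 'I_m1 -> 'I_m2 -> word Sigma n,
    forall (a1 a1' : 'I_m1) (a2 a2' : 'I_m2),
      (a1 <> a1' -> distinguishable G1 (E a1 a2) (E a1' a2')) /\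
      (a2 <> a2' -> distinguishable G2 (E a1 a2) (E a1' a2')).

Definition log2 (x : R) : R := (ln x / ln 2)%R.

Definition feasible_rate (Sigma : finType) (G1 G2 : rel Sigma) (R1 R2 : R)
  : Prop :=
  exists m1 m2 : nat -> nat,
    (forall n, feasible_vec G1 G2 n (m1 n) (m2 n)) /\
    Un_cv (fun n => (log2 (INR (m1 n)) / INR n)%R) R1 /\
    Un_cv (fun n => (log2 (INR (m2 n)) / INR n)%R) R2.

Definition optimal_rate (Sigma : finType) (G1 G2 : rel Sigma) (R1 R2 : R)
  : Prop :=
  feasible_rate G1 G2 R1 R2 /\
  (forall R1', (R1 < R1')%R -> ~ feasible_rate G1 G2 R1' R2) /\
  (forall R2', (R2 < R2')%R -> ~ feasible_rate G1 G2 R1 R2').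

(* Alphabet Sigma_k = 'I_k (sigma_{i+1} <-> i), Sigma_d = {i | i < d}. *)
Definition G1_graph (k d : nat) : rel 'I_k :=
  fun a b => (a != b) && ((d <= a)%N || (d <= b)%N).
Definition G2_graph (k d : nat) : rel 'I_k :=
  fun a b => (a != b) && (a < d)%N && (b < d)%N.
Arguments G1_graph : clear implicits.
Arguments G2_graph : clear implicits.

(* Achievability is time sharing: during a fraction [alpha] of the time the
   sender uses [Sigma_d], whose letters user 1 tells apart, and otherwise
   [sigma_1] and the [k - d] letters outside [Sigma_d], which user 2 tells apart.

   For the converse let [b = log (k - d + 1) / log d >= 1].  User 1 only sees
   the positions where a word has letters in [Sigma_d], so the codewords of a
   message [a] of user 1 determine a shadow in [Sigma_d ^ n], and shadows of
   distinct messages are disjoint.  User 2 only sees the pattern of a word: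
   the positions and values of its letters outside [Sigma_d].  The [m2]
   codewords of [a] have distinct patterns, all compatible with the shadow.
   Splitting off the first letter and using the superadditivity of [x ^ b], an
   induction on [n] shows that a set [U] of words over [Sigma_d] is compatible
   with at most [|U| ^ b] patterns.  Hence every shadow has at least
   [m2 ^ (1/b)] words, so [m1 m2 ^ (1/b) <= d ^ n], which is
   [log m1 / log d + log m2 / log (k - d + 1) <= n]. *)

From mathcomp Require Import all_boot zify.
From Stdlib Require Import Reals Lra.

Set Implicit Arguments.
Unset Strict Implicit.
Unset Printing Implicit Defensive.

Section RealFacts.
Local Open Scope R_scope.

Lemma Rpower_1_base y : Rpower 1 y = 1.
Proof. by rewrite /Rpower ln_1 Rmult_0_r exp_0. Qed.

Lemma Rpower_le_self r b : 1 <= b -> 0 < r <= 1 -> Rpower r b <= r.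
Proof.
move=> hb hr.
have -> : b = 1 + (b - 1) by ring.
rewrite Rpower_plus Rpower_1; last lra.
have h : Rpower r (b - 1) <= Rpower 1 (b - 1) by apply: Rle_Rpower_l; lra.
rewrite Rpower_1_base in h.
have : 0 < Rpower r (b - 1) by apply: exp_pos.
nra.
Qed.

Lemma Rpower_superadditive b x y : 1 <= b -> 0 < x -> 0 < y ->
  Rpower x b + Rpower y b <= Rpower (x + y) b.
Proof.
move=> hb hx hy.
have hxy : 0 < x + y by lra.
have hfrac z : 0 < z -> Rpower z b = Rpower (z / (x + y)) b * Rpower (x + y) b.
  move=> hz; have hq : 0 < z / (x + y) by apply: Rdiv_lt_0_compat.
  rewrite Rpower_mult_distr //.
  by have -> : z / (x + y) * (x + y) = z by field; lra.
have hunit z : 0 < z <= x + y -> 0 < z / (x + y) <= 1.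
  move=> hz; split; first by apply: Rdiv_lt_0_compat; lra.
  apply: (Rmult_le_reg_r (x + y)) => //.
  by rewrite Rmult_1_l /Rdiv Rmult_assoc Rinv_l; lra.
rewrite (hfrac x) // (hfrac y) //.
have h1 := Rpower_le_self hb (hunit x ltac:(lra)).
have h2 := Rpower_le_self hb (hunit y ltac:(lra)).
have hp : 0 < Rpower (x + y) b by apply: exp_pos.
have : x / (x + y) + y / (x + y) = 1 by field; lra.
nra.
Qed.

(* By the mean value theorem: t |-> (t + x)^b - t^b has the nonnegative
   derivative b ((t + x)^(b-1) - t^(b-1)). *)
Lemma Rpower_increment_le b a c x : 1 <= b -> 0 < c <= a -> 0 <= x ->
  Rpower a b - Rpower c b <= Rpower (a + x) b - Rpower (c + x) b.
Proof.
move=> hb hca hx.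
have [<-|hne] := Req_dec c a; first lra.
pose f t := Rpower (t + x) b - Rpower t b.
pose f' t := b * Rpower (t + x) (b - 1) - b * Rpower t (b - 1).
have hf t : c <= t <= a -> derivable_pt_lim f t (f' t).
  move=> ht; apply: derivable_pt_lim_minus; last by apply: derivable_pt_lim_power; lra.
  rewrite -[X in derivable_pt_lim _ _ X]Rmult_1_r.
  apply: (derivable_pt_lim_comp (fun t => t + x) (Rpower^~ b)).
    rewrite -[1]Rplus_0_r.
    exact: derivable_pt_lim_plus (derivable_pt_lim_id t) (derivable_pt_lim_const x t).
  apply: derivable_pt_lim_power; lra.
have [t [hmvt ht]] := MVT_cor2 f f' c a ltac:(lra) hf.
have : 0 <= f' t.
  have : Rpower t (b - 1) <= Rpower (t + x) (b - 1) by apply: Rle_Rpower_l; lra.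
  rewrite /f'; nra.
rewrite /f in hmvt; nra.
Qed.

Lemma INR_addn (m n : nat) : INR (m + n) = INR m + INR n.
Proof. by rewrite -plus_INR plusE. Qed.

Lemma INR_muln (m n : nat) : INR (m * n) = INR m * INR n.
Proof. by rewrite -mult_INR multE. Qed.

Lemma INR_expn (m n : nat) : INR (expn m n) = INR m ^ n.
Proof. by elim: n => [|n IH] //=; rewrite expnS INR_muln IH. Qed.

Lemma INR_subn (m n : nat) : (n <= m)%nat -> INR (m - n) = INR m - INR n.
Proof. by move=> h; rewrite -minus_INR ?minusE //; apply/leP. Qed.

Lemma INR_gt0 (m : nat) : (0 < m)%nat -> 0 < INR m.
Proof. by move=> hm; apply: lt_0_INR; apply/ltP. Qed.

Lemma INR_sum_le (I : Type) (r : seq I) (a : I -> nat) (F : I -> R) :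
  (forall i, INR (a i) <= F i) -> INR (\sum_(i <- r) a i) <= \big[Rplus/0]_(i <- r) F i.
Proof.
move=> haF; apply: (big_ind2 (fun m x => INR m <= x)) => //; first by rewrite /=; lra.
by move=> m1 x1 m2 x2 h1 h2; rewrite INR_addn; lra.
Qed.

Lemma INR_size_mul_le_sum (I : Type) (r : seq I) (f : I -> nat) c :
  (forall i, c <= INR (f i)) -> INR (size r) * c <= INR (\sum_(i <- r) f i).
Proof.
move=> hf; elim: r => [|i r IH]; first by rewrite big_nil /=; lra.
by rewrite big_cons INR_addn [size _]/= S_INR; have := hf i; lra.
Qed.

Lemma ln_gt0 x : 1 < x -> 0 < ln x.
Proof. by move=> hx; rewrite -ln_1; apply: ln_increasing; lra. Qed.

Lemma ln_le x y : 0 < x -> x <= y -> ln x <= ln y.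
Proof. by move=> hx [hxy|<-]; [left; exact: ln_increasing | right]. Qed.

Lemma Rpower_inv_le x y b : 0 < b -> 0 < x -> 0 < y -> x <= Rpower y b -> Rpower x (/ b) <= y.
Proof.
move=> hb hx hy hxy.
rewrite -[X in _ <= X](Rpower_1 y) // -(Rinv_r b); last lra.
rewrite -Rpower_mult; apply: Rle_Rpower_l => //; left; exact: Rinv_0_lt_compat.
Qed.

Lemma Rpower_log_ratio x y : 0 < ln x -> 0 < y -> Rpower x (ln y / ln x) = y.
Proof.
move=> hx hy; rewrite /Rpower /Rdiv Rmult_assoc Rinv_l ?Rmult_1_r ?exp_ln //; lra.
Qed.

Lemma Rlt_div_r x y z : 0 < z -> x * z < y -> x < y / z.
Proof.
move=> hz h; apply: (Rmult_lt_reg_r z) => //.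
by rewrite /Rdiv Rmult_assoc Rinv_l; lra.
Qed.

(* [Rpower 0 b = 1] (as [ln 0 = 0]), so [0] is treated separately. *)
Definition powN (b : R) (m : nat) : R := if m is 0%nat then 0 else Rpower (INR m) b.

Lemma powN_pos b (m : nat) : (0 < m)%nat -> powN b m = Rpower (INR m) b.
Proof. by case: m. Qed.

Lemma powN_superadditive b (m1 m2 : nat) : 1 <= b -> powN b m1 + powN b m2 <= powN b (m1 + m2).
Proof.
move=> hb; case: m1 => [|m1]; first by rewrite /= add0n; lra.
case: m2 => [|m2]; first by rewrite addn0 /=; lra.
rewrite !powN_pos // INR_addn; apply: Rpower_superadditive => //; exact: INR_gt0.
Qed.

Lemma powN_sum_le b (s : seq nat) : 1 <= b ->
  \big[Rplus/0]_(u <- s) powN b u <= powN b (sumn s).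
Proof.
move=> hb; elim: s => [|u s IH]; first by rewrite big_nil /=; lra.
rewrite big_cons /=; have := powN_superadditive u (sumn s) hb; lra.
Qed.

Lemma powN_gap_mono b (v : nat) (s : seq nat) (m : nat) :
  1 <= b -> (0 < v)%nat -> all (fun u => v <= u)%nat s ->
  powN b (m + size s * v) - INR (size s) * powN b v
  <= powN b (m + sumn s) - \big[Rplus/0]_(u <- s) powN b u.
Proof.
move=> hb hv; elim: s m => [|u s IH] m; first by rewrite big_nil /= addn0; lra.
move=> /andP [hvu hall].
have hu : (0 < u)%nat by apply: leq_trans hvu.
pose P := (m + size s * v)%nat.
have hstep : powN b (P + v) - powN b v <= powN b (P + u) - powN b u.
  rewrite !powN_pos ?addn_gt0 ?hv ?hu ?orbT // (INR_addn P v) (INR_addn P u).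
  rewrite (Rplus_comm (INR P) (INR v)) (Rplus_comm (INR P) (INR u)).
  suff : 0 < INR v <= INR u by move/(Rpower_increment_le hb)/(_ (pos_INR P)); lra.
  by split; [exact: INR_gt0 | apply: le_INR; lia].
have := IH (m + u)%nat hall.
have -> : (m + u + size s * v = P + u)%nat by rewrite addnAC.
have -> : (m + u + sumn s = m + sumn (u :: s))%nat by rewrite addnA.
have -> : (m + size (u :: s) * v = P + v)%nat by rewrite /P [size _]/= mulSn addnA addnAC.
rewrite big_cons (_ : INR (size (u :: s)) = INR (size s) + 1) ?S_INR //; lra.
Qed.

(* Merging [d] masses [u_i >= v] gains at least as much as merging [d]
   masses [v], namely [(d v) ^ b - d v ^ b = (D - d) v ^ b]. *)
Lemma powN_sum_gap b (d D v : nat) (s : seq nat) : 1 <= b ->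
  Rpower (INR d) b = INR D -> (0 < d)%nat -> (d <= D)%nat -> size s = d ->
  all (fun u => v <= u)%nat s ->
  \big[Rplus/0]_(u <- s) powN b u + INR (D - d) * powN b v <= powN b (sumn s).
Proof.
move=> hb hD hd hdD hs hall.
case: v hall => [|v] hall; first by rewrite /= Rmult_0_r Rplus_0_r; exact: powN_sum_le.
have := powN_gap_mono 0 hb (ltn0Sn v) hall.
rewrite !add0n hs (@powN_pos b (d * v.+1)) ?muln_gt0 ?hd // INR_muln.
rewrite -Rpower_mult_distr ?hD ?INR_subn ?(@powN_pos b v.+1) //; try exact: INR_gt0.
lra.
Qed.

End RealFacts.

Section FfunCons.
Variable T : Type.

Definition ffun_cons n (a : T) (f : {ffun 'I_n -> T}) : {ffun 'I_n.+1 -> T} :=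
  [ffun t => if unlift ord0 t is Some t' then f t' else a].

Definition ffun_behead n (f : {ffun 'I_n.+1 -> T}) : {ffun 'I_n -> T} :=
  [ffun t => f (lift ord0 t)].

Lemma ffun_cons0 n a (f : {ffun 'I_n -> T}) : ffun_cons a f ord0 = a.
Proof. by rewrite ffunE unlift_none. Qed.

Lemma ffun_consS n a (f : {ffun 'I_n -> T}) t : ffun_cons a f (lift ord0 t) = f t.
Proof. by rewrite ffunE liftK. Qed.

Lemma ffun_behead_cons n a (f : {ffun 'I_n -> T}) : ffun_behead (ffun_cons a f) = f.
Proof. by apply/ffunP => t; rewrite ffunE ffun_consS. Qed.

Lemma ffun_cons_behead n (f : {ffun 'I_n.+1 -> T}) : ffun_cons (f ord0) (ffun_behead f) = f.
Proof.
apply/ffunP => t; case: (unliftP ord0 t) => [t'|] ->; last by rewrite ffun_cons0.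
by rewrite ffun_consS ffunE.
Qed.
End FfunCons.

Lemma card_by_head (A : finType) n (U : {set {ffun 'I_n.+1 -> A}}) :
  #|U| = \sum_(c : A) #|[set z | ffun_cons c z \in U]|.
Proof.
rewrite -sum1_card big_mkcond /=.
rewrite (reindex (fun p : A * {ffun 'I_n -> A} => ffun_cons p.1 p.2)) /=; last first.
  exists (fun z : {ffun 'I_n.+1 -> A} => (z ord0, ffun_behead z)) => [[a f] _|z _] /=.
    by rewrite ffun_cons0 ffun_behead_cons.
  by rewrite ffun_cons_behead.
rewrite -(pair_big xpredT xpredT (fun a f => if ffun_cons a f \in U then 1 else 0)) /=.
apply: eq_bigr => c _; rewrite -sum1_card [RHS]big_mkcond /=.
by apply: eq_bigr => z _; rewrite inE.
Qed.

Lemma card_sum_mem (T : finType) (A : {pred T}) : #|A| = \sum_x (x \in A : nat).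
Proof. by rewrite -sum1_card big_mkcond /=; apply: eq_bigr => x _; case: (x \in A). Qed.

(* Double counting: a point lying in [j > 0] of the sets is counted [j] times
   on the right and at most [1 + (#|I| - 1) [j == #|I|]] times on the left. *)
Lemma card_bigcup_bigcap_le (I T : finType) (A : I -> {set T}) :
  #|\bigcup_i A i| + (#|I| - 1) * #|\bigcap_i A i| <= \sum_i #|A i|.
Proof.
rewrite (eq_bigr (fun i => \sum_x (x \in A i : nat))) => [|i _]; last exact: card_sum_mem.
rewrite exchange_big /= (card_sum_mem (\bigcup_i A i)) (card_sum_mem (\bigcap_i A i)).
rewrite big_distrr -big_split /=.
apply: leq_sum => x _; rewrite -(card_sum_mem [pred i | x \in A i]).
have [/bigcapP hI|_] := boolP (x \in \bigcap_i A i).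
  have -> : #|[pred i | x \in A i]| = #|I| by apply: eq_card => i; rewrite !inE hI.
  rewrite muln1.
  case: (boolP (x \in \bigcup_i A i)) => [/bigcupP [i _ _]|_] /=; last by rewrite leq_subr.
  by rewrite add1n subn1 prednK //; apply/card_gt0P; exists i.
rewrite muln0 addn0.
case: (boolP (x \in \bigcup_i A i)) => //= /bigcupP [i _ hi].
by apply/card_gt0P; exists i.
Qed.

Lemma sum_card_le_of_disjoint (I T : finType) (A : I -> {set T}) :
  (forall i j x, x \in A i -> x \in A j -> i = j) -> \sum_i #|A i| <= #|T|.
Proof.
move=> hdisj; rewrite (eq_bigr (fun i => \sum_x (x \in A i : nat))) => [|i _]; last exact: card_sum_mem.
rewrite exchange_big /= -sum1_card; apply: leq_sum => x _.
rewrite -(card_sum_mem [pred i | x \in A i]).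
by apply/card_le1P => i hi j; rewrite !inE /= in hi *; apply/idP/eqP => [hj|->] //; exact: hdisj hj hi.
Qed.

Lemma card_high_letters_le k d : d <= k -> #|[set e : 'I_k | d <= e]| <= k - d.
Proof.
move=> hdk; have := cardsC [set e : 'I_k | d <= e]; rewrite card_ord.
have -> : ~: [set e : 'I_k | d <= e] = [set e : 'I_k | e < d].
  by apply/setP => e; rewrite !inE ltnNge.
suff : d <= #|[set e : 'I_k | e < d]| by lia.
have widen_inj : injective (widen_ord hdk) by move=> i j /(congr1 val) /= /val_inj.
rewrite -[X in X <= _](card_ord d) -(card_imset _ widen_inj).
by apply/subset_leq_card/subsetP => _ /imsetP [i _ ->]; rewrite inE /= ltn_ord.
Qed.

Section Patterns.
Variables k d : nat.

Definition agrees n (x : {ffun 'I_n -> 'I_k}) (z : {ffun 'I_n -> 'I_d}) : bool :=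
  [forall t, (x t < d) ==> (val (z t) == val (x t))].

(* The words over [Sigma_d] that user 1 cannot tell apart from [x]. *)
Definition cylinder n (x : {ffun 'I_n -> 'I_k}) : {set {ffun 'I_n -> 'I_d}} :=
  [set z | agrees x z].

(* What user 2, who confuses all the letters of [Sigma_d], sees of [x]. *)
Definition pattern n (x : {ffun 'I_n -> 'I_k}) : {ffun 'I_n -> option 'I_k} :=
  [ffun t => if x t < d then None else Some (x t)].

Definition patterns n (U : {set {ffun 'I_n -> 'I_d}}) :=
  @pattern n @: [set x | cylinder x \subset U].

Lemma mem_patterns n (U : {set {ffun 'I_n -> 'I_d}}) x :
  cylinder x \subset U -> pattern x \in patterns U.
Proof. by move=> hx; apply: imset_f; rewrite inE. Qed.

Lemma patternsP n (U : {set {ffun 'I_n -> 'I_d}}) p :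
  reflect (exists2 x, cylinder x \subset U & p = pattern x) (p \in patterns U).
Proof.
apply: (iffP imsetP) => [[x hx ->]|[x hx ->]]; exists x => //; first by rewrite inE in hx.
by rewrite inE.
Qed.

Lemma patternsS n (U V : {set {ffun 'I_n -> 'I_d}}) :
  U \subset V -> patterns U \subset patterns V.
Proof.
move=> hUV; apply/subsetP => _ /patternsP [x hx ->]; apply: mem_patterns.
exact: subset_trans hUV.
Qed.

Lemma patterns0 n : 0 < d -> patterns (set0 : {set {ffun 'I_n -> 'I_d}}) = set0.
Proof.
move=> hd; apply/setP => p; rewrite inE; apply/patternsP => -[x hx _].
pose z : {ffun 'I_n -> 'I_d} := [ffun t => insubd (Ordinal hd) (val (x t))].
have : z \in cylinder x.
  by rewrite inE; apply/forallP => t; apply/implyP => ht; rewrite ffunE insubdK.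
by move/(subsetP hx); rewrite inE.
Qed.

Definition slice n (U : {set {ffun 'I_n.+1 -> 'I_d}}) (c : 'I_d) := [set z | ffun_cons c z \in U].

Definition core n (U : {set {ffun 'I_n.+1 -> 'I_d}}) := \bigcap_(c : 'I_d) slice U c.

Lemma pattern_behead n (x : {ffun 'I_n.+1 -> 'I_k}) :
  ffun_behead (pattern x) = pattern (ffun_behead x).
Proof. by apply/ffunP => t; rewrite !ffunE. Qed.

Lemma agrees_cons n (x : {ffun 'I_n.+1 -> 'I_k}) (c : 'I_d) z :
  (x ord0 < d -> val c = val (x ord0)) -> agrees (ffun_behead x) z ->
  agrees x (ffun_cons c z).
Proof.
move=> h0 /forallP hz; apply/forallP => t; apply/implyP.
case: (unliftP ord0 t) => [t'|] ->; last by rewrite ffun_cons0 => /h0 ->.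
by rewrite ffun_consS => ht; move/implyP: (hz t'); rewrite ffunE; apply.
Qed.

Definition low_head_patterns n (U : {set {ffun 'I_n.+1 -> 'I_d}}) :=
  [set p : {ffun 'I_n.+1 -> option 'I_k} | (p ord0 == None) && (ffun_behead p \in \bigcup_c patterns (slice U c))].

Definition high_head_patterns n (U : {set {ffun 'I_n.+1 -> 'I_d}}) :=
  [set p : {ffun 'I_n.+1 -> option 'I_k} | [exists e : 'I_k, (d <= e) && (p ord0 == Some e)]
           && (ffun_behead p \in patterns (core U))].

Lemma patterns_sub_head_split n (U : {set {ffun 'I_n.+1 -> 'I_d}}) :
  patterns U \subset low_head_patterns U :|: high_head_patterns U.
Proof.
apply/subsetP => _ /patternsP [x hc ->]; rewrite !inE pattern_behead ffunE.
have [hx|hx] := ltnP (x ord0) d.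
  rewrite eqxx /=; apply/orP; left; apply/bigcupP; exists (Ordinal hx) => //; apply: mem_patterns.
  apply/subsetP => z hz; rewrite inE; apply: (subsetP hc); rewrite inE.
  by apply: agrees_cons => //; rewrite inE in hz.
rewrite /=; apply/andP; split; first by apply/existsP; exists (x ord0); rewrite hx eqxx.
apply: mem_patterns; apply/subsetP => z hz; apply/bigcapP => c _; rewrite inE.
apply: (subsetP hc); rewrite inE; apply: agrees_cons => [h|]; last by rewrite inE in hz.
by move: hx; rewrite leqNgt h.
Qed.

Lemma card_low_head_patterns n (U : {set {ffun 'I_n.+1 -> 'I_d}}) :
  #|low_head_patterns U| <= #|\bigcup_c patterns (slice U c)|.
Proof.
rewrite -(card_in_imset (f := @ffun_behead _ n)); last first.
  move=> p q; rewrite !inE => /andP [/eqP hp _] /andP [/eqP hq _] he.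
  by rewrite -(ffun_cons_behead p) -(ffun_cons_behead q) hp hq he.
apply: subset_leq_card; apply/subsetP => _ /imsetP [p + ->].
by rewrite inE => /andP [].
Qed.

Lemma card_high_head_patterns n (U : {set {ffun 'I_n.+1 -> 'I_d}}) :
  #|high_head_patterns U| <= #|[set e : 'I_k | d <= e]| * #|patterns (core U)|.
Proof.
rewrite -cardsX; apply: leq_trans (leq_imset_card (fun e_p => ffun_cons (Some e_p.1) e_p.2) _).
apply: subset_leq_card; apply/subsetP => p.
rewrite inE => /andP [/existsP [e /andP [he /eqP h0]] hp].
apply/imsetP; exists (e, ffun_behead p); first by rewrite in_setX inE he.
by rewrite /= -h0 ffun_cons_behead.
Qed.

(* The pattern of a word decides whether its first letter lies in [Sigma_d];
   if it does, the rest of the pattern is a pattern of some slice, and if it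
   does not, of every slice. *)
Lemma card_patterns_step n (U : {set {ffun 'I_n.+1 -> 'I_d}}) : 0 < d -> d <= k ->
  #|patterns U| + (d - 1) * #|patterns (core U)|
  <= \sum_c #|patterns (slice U c)| + (k - d) * #|patterns (core U)|.
Proof.
move=> hd hdk.
have hsplit : #|patterns U| <= #|low_head_patterns U| + #|high_head_patterns U|.
  exact: leq_trans (subset_leq_card (patterns_sub_head_split U)) (leq_card_setU _ _).
have hlow := card_low_head_patterns U.
have hhigh : #|high_head_patterns U| <= (k - d) * #|patterns (core U)|.
  exact: leq_trans (card_high_head_patterns U) (leq_mul (card_high_letters_le hdk) _).
have hcore : #|patterns (core U)| <= #|\bigcap_c patterns (slice U c)|.
  by apply/subset_leq_card/bigcapsP => c _; apply/patternsS/bigcap_inf.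
have := card_bigcup_bigcap_le (fun c => patterns (slice U c)); rewrite card_ord.
have := leq_mul (leqnn (d - 1)) hcore; lia.
Qed.

End Patterns.



Lemma card_patterns_le0 b k d (U : {set {ffun 'I_0 -> 'I_d}}) : 0 < d ->
  (INR #|patterns k U| <= powN b #|U|)%R.
Proof.
move=> hd; have [->|[z hz]] := set_0Vmem U; first by rewrite patterns0 // !cards0 /=; lra.
have hU : #|U| = 1.
  apply/eqP; rewrite eqn_leq card_gt0; apply/andP; split; last by apply/set0Pn; exists z.
  by apply: leq_trans (max_card _) _; rewrite card_ffun !card_ord.
have hP : #|patterns k U| <= 1.
  by apply: leq_trans (max_card _) _; rewrite card_ffun !card_ord.
rewrite hU /= Rpower_1_base; apply: (le_INR _ 1); exact/leP.
Qed.

Lemma card_patterns_le b k d : (1 <= b)%R -> Rpower (INR d) b = INR (k - d + 1) ->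
  0 < d -> 2 * d <= k + 1 ->
  forall n (U : {set {ffun 'I_n -> 'I_d}}), (INR #|patterns k U| <= powN b #|U|)%R.
Proof.
move=> hb hD hd hdk; elim => [|n IH] U; first exact: card_patterns_le0.
have hstep : #|patterns k U|
    <= \sum_(c <- enum 'I_d) #|patterns k (slice U c)| + (k - d + 1 - d) * #|patterns k (core U)|.
  have -> : \sum_(c <- enum 'I_d) #|patterns k (slice U c)| = \sum_c #|patterns k (slice U c)|.
    by rewrite big_enum.
  have hdk' : d <= k by lia.
  have e : k - d = (d - 1) + (k - d + 1 - d) by lia.
  have := card_patterns_step U hd hdk'; rewrite {1}e mulnDl; lia.
have hslices := INR_sum_le (enum 'I_d) (fun c => IH (slice U c)).
have hcore := IH (core U).
have hgap := @powN_sum_gap b d (k - d + 1) #|core U| [seq #|slice U c| | c <- enum 'I_d] hb hD.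
rewrite big_map sumnE big_map big_enum /= -card_by_head size_map size_enum_ord in hgap.
apply: Rle_trans (le_INR _ _ (leP hstep)) _; rewrite INR_addn INR_muln.
apply: Rle_trans (hgap hd _ _ _) => //; [|lia|].
- apply: Rplus_le_compat => //; apply: Rmult_le_compat_l => //; exact: pos_INR.
- by apply/allP => _ /mapP [c _ ->]; apply/subset_leq_card/bigcap_inf.
Qed.

Section CodeShadows.
Variables (k d n m1 m2 : nat) (E : 'I_m1 -> 'I_m2 -> word 'I_k n).
Hypothesis hE : forall (a1 a1' : 'I_m1) (a2 a2' : 'I_m2),
  (a1 <> a1' -> distinguishable (G1_graph k d) (E a1 a2) (E a1' a2')) /\
  (a2 <> a2' -> distinguishable (G2_graph k d) (E a1 a2) (E a1' a2')).

Definition codeword a1 a2 : {ffun 'I_n -> 'I_k} := finfun (E a1 a2).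

Definition shadow a1 : {set {ffun 'I_n -> 'I_d}} := \bigcup_a2 cylinder d (codeword a1 a2).

Lemma pattern_codeword_inj a1 : injective (fun a2 => pattern d (codeword a1 a2)).
Proof.
move=> a2 a2'; apply: contra_eq => /eqP hne.
have [t [hneq hG]] := (hE a1 a1 a2 a2').2 hne.
apply/eqP => /ffunP /(_ t); rewrite !ffunE.
move: hG; rewrite /G2_graph hneq /=.
by case: ltnP => h1; case: ltnP => h2 //= _ [] /eqP; rewrite (negbTE hneq).
Qed.

Lemma le_card_patterns_shadow a1 : m2 <= #|patterns k (shadow a1)|.
Proof.
rewrite -[m2]card_ord -(card_imset _ (@pattern_codeword_inj a1)).
apply/subset_leq_card/subsetP => _ /imsetP [a2 _ ->]; apply: mem_patterns.
exact: (bigcup_max a2).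
Qed.

Lemma shadows_disjoint a a' z : z \in shadow a -> z \in shadow a' -> a = a'.
Proof.
move=> /bigcupP [a2 _ hz] /bigcupP [a2' _ hz']; apply/eqP; apply: contraT => /eqP hne.
have [t [hneq hG]] := (hE a a' a2 a2').1 hne.
move: hG; rewrite /G1_graph hneq /= negb_or -!ltnNge => /andP [h1 h2].
rewrite !inE in hz hz'.
move/forallP/(_ t)/implyP: hz; rewrite ffunE => /(_ h1) /eqP e1.
move/forallP/(_ t)/implyP: hz'; rewrite ffunE => /(_ h2) /eqP e2.
by move: hneq; rewrite -val_eqE -e1 -e2 eqxx.
Qed.

Lemma sum_card_shadow_le : \sum_a #|shadow a| <= expn d n.
Proof.
have -> : expn d n = #|{ffun 'I_n -> 'I_d}| by rewrite card_ffun !card_ord.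
exact: sum_card_le_of_disjoint shadows_disjoint.
Qed.
Lemma card_shadow_ge b a1 : (1 <= b)%R -> Rpower (INR d) b = INR (k - d + 1) ->
  0 < d -> 2 * d <= k + 1 -> 0 < m2 -> (Rpower (INR m2) (/ b) <= INR #|shadow a1|)%R.
Proof.
move=> hb hbD hd hdk hm2.
have hm2u : (INR m2 <= powN b #|shadow a1|)%R.
  apply: Rle_trans (le_INR _ _ (leP (le_card_patterns_shadow a1))) _.
  exact (card_patterns_le hb hbD hd hdk (shadow a1)).
case: #|shadow a1| hm2u => [|u] hm2u; first by have := INR_gt0 hm2; rewrite /= in hm2u; lra.
rewrite powN_pos // in hm2u.
by apply: Rpower_inv_le => //; [lra | apply: INR_gt0 | apply: INR_gt0].
Qed.

End CodeShadows.



Lemma feasible_vec_log_bound k d n m1 m2 : 2 <= d -> 2 * d <= k + 1 ->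
  feasible_vec (G1_graph k d) (G2_graph k d) n m1 m2 ->
  (ln (INR m1) / ln (INR d) + ln (INR m2) / ln (INR (k - d + 1)) <= INR n)%R.
Proof.
move=> hd hdk [hm1 [hm2 [E hE]]].
have lnd : (0 < ln (INR d))%R by apply: ln_gt0; apply: (lt_INR 1); apply/ltP.
have lndD : (ln (INR d) <= ln (INR (k - d + 1)))%R.
  by apply: ln_le; [apply: INR_gt0; lia | apply: le_INR; lia].
pose b := (ln (INR (k - d + 1)) / ln (INR d))%R.
have hb : (1 <= b)%R.
  apply: (Rmult_le_reg_r (ln (INR d))) => //.
  by rewrite Rmult_1_l /b /Rdiv Rmult_assoc Rinv_l; lra.
have hbD : Rpower (INR d) b = INR (k - d + 1) by rewrite Rpower_log_ratio //; apply: INR_gt0; lia.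
pose c := Rpower (INR m2) (/ b).
have hc a : (c <= INR #|shadow d E a|)%R by apply: card_shadow_ge => //; exact: ltnW.
have hcount : (INR m1 * c <= INR d ^ n)%R.
  have := INR_size_mul_le_sum (enum 'I_m1) hc; rewrite size_enum_ord big_enum /= => hsum.
  apply: Rle_trans hsum _; rewrite -INR_expn; apply/le_INR/leP; exact: sum_card_shadow_le.
have hpos : (0 < INR m1 * c)%R by apply: Rmult_lt_0_compat; [exact: INR_gt0 | exact: exp_pos].
have := ln_le hpos hcount.
rewrite ln_mult ?ln_Rpower ?ln_pow; try (by apply: INR_gt0; lia); try exact: exp_pos.
rewrite /b => hlog; apply: (Rmult_le_reg_r (ln (INR d))) => //.
suff -> : ((ln (INR m1) / ln (INR d) + ln (INR m2) / ln (INR (k - d + 1))) * ln (INR d)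
  = ln (INR m1) + / (ln (INR (k - d + 1)) / ln (INR d)) * ln (INR m2))%R by [].
field; lra.
Qed.

Section Rates.
Local Open Scope R_scope.

Lemma Un_cv_ext u v l : Un_cv u l -> (forall n, u n = v n) -> Un_cv v l.
Proof. by move=> hu huv eps heps; have [N hN] := hu eps heps; exists N => n; rewrite -huv; apply: hN. Qed.

Lemma Un_cv_const c : Un_cv (fun _ => c) c.
Proof. by move=> eps heps; exists O => n _; rewrite /R_dist Rminus_diag Rabs_R0. Qed.

Lemma Un_cv_scal c u l : Un_cv u l -> Un_cv (fun n => c * u n) (c * l).
Proof. exact: CV_mult (Un_cv_const c). Qed.

Lemma Un_cv_INR_ratio (f : nat -> nat) c :
  (forall n, Rabs (INR (f n) - c * INR n) <= 1) -> Un_cv (fun n => INR (f n) / INR n) c.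
Proof.
move=> hf eps heps.
have [N [hN hN0]] := archimed_cor1 eps heps.
exists N => n hn; rewrite /R_dist.
have hNn : INR N <= INR n by apply: le_INR.
have hN0' : 0 < INR N by apply: lt_0_INR.
have hn0 : 0 < INR n by lra.
have -> : INR (f n) / INR n - c = (INR (f n) - c * INR n) / INR n by field; lra.
rewrite /Rdiv Rabs_mult Rabs_inv (Rabs_right (INR n)); last lra.
apply: Rle_lt_trans (_ : 1 * / INR n < eps); last first.
  by apply: Rle_lt_trans hN; rewrite Rmult_1_l; apply: Rinv_le_contravar.
by apply: Rmult_le_compat_r; [left; exact: Rinv_0_lt_compat | exact: hf].
Qed.

Definition floor_mul (alpha : R) (n : nat) : nat := Z.to_nat (Int_part (alpha * INR n)).

Lemma floor_mul_spec alpha n : 0 <= alpha <= 1 ->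
  Rabs (INR (floor_mul alpha n) - alpha * INR n) <= 1 /\ (floor_mul alpha n <= n)%nat.
Proof.
move=> ha; have hn := pos_INR n.
have [h1 h2] := base_Int_part (alpha * INR n).
have hz : (0 <= Int_part (alpha * INR n))%Z.
  suff : (-1 < Int_part (alpha * INR n))%Z by lia.
  apply: lt_IZR; have : 0 <= alpha * INR n by apply: Rmult_le_pos; lra.
  lra.
have hfl : INR (floor_mul alpha n) = IZR (Int_part (alpha * INR n)).
  by rewrite /floor_mul INR_IZR_INZ Znat.Z2Nat.id.
split; first by rewrite hfl; apply: Rabs_le; lra.
apply/leP; apply: INR_le; rewrite hfl; nra.
Qed.

End Rates.

Lemma exists_ffun_neq (A B : finType) (f g : {ffun A -> B}) : f <> g -> exists a, f a != g a.
Proof.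
move=> hne; apply/existsP; apply: contraT; rewrite negb_exists => /forallP hfg.
by case: hne; apply/ffunP => a; apply/eqP; rewrite -[_ == _]negbK hfg.
Qed.

Section TimeSharing.
Variables k d : nat.
Hypotheses (hd : 0 < d) (hdk : d <= k).

Definition low_letter (i : 'I_d) : 'I_k := widen_ord hdk i.

Lemma high_letter_subproof (j : 'I_(k - d + 1)) : (if val j == 0 then 0 else j + d - 1) < k.
Proof. by have := ltn_ord j; case: eqP => /=; lia. Qed.

(* User 2's alphabet: [sigma_1] together with the [k - d] letters outside
   [Sigma_d]; no two of them are confusable for user 2. *)
Definition high_letter (j : 'I_(k - d + 1)) : 'I_k := Ordinal (high_letter_subproof j).

Lemma high_letter_inj : injective high_letter.
Proof.
move=> j j' /(congr1 val) /=; case: eqP => h1; case: eqP => h2 e; apply: val_inj => /=; lia.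
Qed.

Lemma high_letter_lt (j : 'I_(k - d + 1)) : (high_letter j < d) = (val j == 0).
Proof. by rewrite /high_letter /=; case: eqP => /= h; lia. Qed.

Lemma feasible_vec_time_sharing n n1 n2 : n = n1 + n2 ->
  feasible_vec (G1_graph k d) (G2_graph k d) n
    #|{ffun 'I_n1 -> 'I_d}| #|{ffun 'I_n2 -> 'I_(k - d + 1)}|.
Proof.
move=> hn; split; first by rewrite card_ffun !card_ord expn_gt0 hd.
split; first by rewrite card_ffun !card_ord expn_gt0 addn1.
pose E (a1 : 'I_#|{ffun 'I_n1 -> 'I_d}|) (a2 : 'I_#|{ffun 'I_n2 -> 'I_(k - d + 1)}|)
  (t : 'I_n) := match fintype.split (cast_ord hn t) with
                | inl i => low_letter (enum_val a1 i)
                | inr j => high_letter (enum_val a2 j) end.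
exists E.
move=> a1 a1' a2 a2'; split => hne.
- have [i hi] := exists_ffun_neq (fun e => hne (enum_val_inj e)).
  exists (cast_ord (esym hn) (lshift n2 i)); rewrite /E cast_ordKV.
  rewrite (_ : lshift n2 i = unsplit (inl i)) // unsplitK.
  have hne' : low_letter (enum_val a1 i) != low_letter (enum_val a1' i).
    by apply: contra hi => /eqP /(congr1 val) /= h; apply/eqP/val_inj.
  by rewrite hne' /G1_graph hne' /= !(leqNgt d) !ltn_ord.
- have [j hj] := exists_ffun_neq (fun e => hne (enum_val_inj e)).
  exists (cast_ord (esym hn) (rshift n1 j)); rewrite /E cast_ordKV.
  rewrite (_ : rshift n1 j = unsplit (inr j)) // unsplitK.
  have hne' : high_letter (enum_val a2 j) != high_letter (enum_val a2' j).
    by apply: contra hj => /eqP /high_letter_inj ->.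
  rewrite hne' /G2_graph hne' /= !high_letter_lt; split=> //.
  apply/negP => /andP [/eqP h1 /eqP h2]; move/eqP: hj; apply.
  by apply: val_inj; rewrite h1 h2.
Qed.

End TimeSharing.

Section Optimality.
Local Open Scope R_scope.

Lemma log2_INR_card_ffun m q : (0 < q)%nat ->
  log2 (INR #|{ffun 'I_m -> 'I_q}|) = INR m * log2 (INR q).
Proof.
move=> hq; rewrite card_ffun !card_ord INR_expn /log2 ln_pow; first by rewrite /Rdiv Rmult_assoc.
exact: INR_gt0.
Qed.

Lemma log2_ratio x y : log2 x / log2 y = ln x / ln y.
Proof.
have ln2 : 0 < ln 2 by apply: ln_gt0; lra.
rewrite /log2; have [->|hy] := Req_dec (ln y) 0; first by rewrite /Rdiv Rmult_0_l Rinv_0 !Rmult_0_r.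
by field; lra.
Qed.


Lemma log2_gt0 (q : nat) : (2 <= q)%nat -> 0 < log2 (INR q).
Proof.
move=> hq; apply: Rdiv_lt_0_compat; apply: ln_gt0; last lra.
by apply: (lt_INR 1); apply/ltP.
Qed.

Lemma feasible_rate_time_sharing k d alpha : (2 <= d)%nat -> (2 * d <= k + 1)%nat ->
  0 <= alpha <= 1 ->
  feasible_rate (G1_graph k d) (G2_graph k d)
    (alpha * log2 (INR d)) ((1 - alpha) * log2 (INR (k - d + 1))).
Proof.
move=> hd hdk ha.
have hfl n := floor_mul_spec n ha.
exists (fun n => #|{ffun 'I_(floor_mul alpha n) -> 'I_d}|),
       (fun n => #|{ffun 'I_(n - floor_mul alpha n) -> 'I_(k - d + 1)}|).
split; [|split].
- move=> n; apply: feasible_vec_time_sharing; [lia | lia |].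
  by rewrite subnKC //; case: (hfl n).
- have hcv : Un_cv (fun n => INR (floor_mul alpha n) / INR n) alpha.
    by apply: Un_cv_INR_ratio => n; case: (hfl n).
  rewrite Rmult_comm; apply: Un_cv_ext (Un_cv_scal _ hcv) _ => n.
  by rewrite log2_INR_card_ffun /Rdiv; [ring | lia].
- have hcv : Un_cv (fun n => INR (n - floor_mul alpha n) / INR n) (1 - alpha).
    apply: Un_cv_INR_ratio => n; have [h hle] := hfl n.
    by rewrite INR_subn // -Rabs_Ropp; apply: Rle_trans h; right; congr Rabs; ring.
  rewrite Rmult_comm; apply: Un_cv_ext (Un_cv_scal _ hcv) _ => n.
  by rewrite log2_INR_card_ffun /Rdiv; [ring | lia].
Qed.

Lemma feasible_rate_le k d R1 R2 : (2 <= d)%nat -> (2 * d <= k + 1)%nat ->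
  feasible_rate (G1_graph k d) (G2_graph k d) R1 R2 ->
  R1 / log2 (INR d) + R2 / log2 (INR (k - d + 1)) <= 1.
Proof.
move=> hd hdk [m1 [m2 [hf [h1 h2]]]].
apply: (Rle_cv_lim _ (CV_plus _ _ _ _ (CV_mult _ _ _ _ h1 (Un_cv_const _))
                                         (CV_mult _ _ _ _ h2 (Un_cv_const _))) (Un_cv_const 1)).
move=> n; have := feasible_vec_log_bound hd hdk (hf n).
rewrite -!log2_ratio.
(* At [n = 0] both rates are [_ / 0 = 0]. *)
case: n => [|n] hlog; first by rewrite /= /Rdiv Rinv_0 !Rmult_0_r !Rmult_0_l; lra.
have hn : 0 < INR n.+1 by apply: INR_gt0.
have ld := log2_gt0 hd; have lD : 0 < log2 (INR (k - d + 1)) by apply: log2_gt0; lia.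
apply: (Rmult_le_reg_r (INR n.+1)) => //; rewrite Rmult_1_l.
by apply: Rle_trans hlog; right; field; lra.
Qed.

End Optimality.

Theorem theorem8 (d k : nat) :
  (2 <= d)%N -> (2 * d <= k + 1)%N ->
  forall alpha : R, (0 <= alpha <= 1)%R ->
  optimal_rate (G1_graph k d) (G2_graph k d)
    (alpha * log2 (INR d))%R ((1 - alpha) * log2 (INR (k - d + 1)))%R.
Proof.
move=> hd hdk alpha ha.
have ld := log2_gt0 hd; have lD : (0 < log2 (INR (k - d + 1)))%R by apply: log2_gt0; lia.
split; [exact: feasible_rate_time_sharing | split] => R' hR' /(feasible_rate_le hd hdk).
- by have := Rlt_div_r ld hR'; rewrite Rmult_div_l; lra.
- by have := Rlt_div_r lD hR'; rewrite Rmult_div_l; lra.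
Qed.
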